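(* Let $d\in\mathbb{N}$, $d\ge1$, and let $\alpha\in E_d$ with $\alpha\neq0$. There exists exactly one quad $(i;a,b,c)$ representing $\alpha$ such that $$d-2f(i+1)<af(i)+bf(i+1)+cf(i+2)\le d,$$ and for this quad $s_d(\alpha)=a+b+c$.
   Context: Let $f\colon\mathbb{Z}\to\mathbb{Z}$ be defined by $f(0)=f(1)=1$, $f(i+2)=f(i+1)+f(i)$ for all $i\in\mathbb{Z}$; $\gamma=(1+\sqrt5)/2$; $\mathbb{Z}[\gamma]=\mathbb{Z}\oplus\mathbb{Z}\gamma^{-1}$. For $d\in\mathbb{N}$, $E_d$ is the set of $\alpha\in\mathbb{Z}[\gamma]$ such that $\alpha=\sum_{k=1}^s\gamma^{-i_k}$ and $\sum_{k=1}^sf(i_k)\le d$ for some $s\in\mathbb{N}$ and integers $0\le i_1\le\dots\le i_s$ (empty sum $=0$); $s_d(\alpha)$ is the largest such $s$. A quad is a tuple $(i;a,b,c)$ of non-negative integers with $a\ge1$; it represents $\alpha$ if $\alpha=a\gamma^{-i}+b\gamma^{-i-1}+c\gamma^{-i-2}$. *)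

From Stdlib Require Import Reals Lra Lia ZArith List Sorted.
Import ListNotations.
Open Scope R_scope.

(* f(0)=f(1)=1, f(i+2)=f(i+1)+f(i); only non-negative arguments are needed. *)
Fixpoint f (n : nat) : Z :=
  match n with
  | O => 1%Z
  | S m => match m with
           | O => 1%Z
           | S k => (f m + f k)%Z
           end
  end.

Definition gamma : R := (1 + sqrt 5) / 2.

Definition gpow_inv (i : nat) : R := / (gamma ^ i).

Definition val (l : list nat) : R := fold_right (fun i acc => gpow_inv i + acc) 0 l.

Definition weight (l : list nat) : Z := fold_right (fun i acc => (f i + acc)%Z) 0%Z l.

Definition admissible (d : Z) (alpha : R) (l : list nat) : Prop :=
  Sorted le l /\ val l = alpha /\ (weight l <= d)%Z.

Definition in_E (d : Z) (alpha : R) : Prop := exists l, admissible d alpha l.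

Definition is_s (d : Z) (alpha : R) (s : nat) : Prop :=
  (exists l, admissible d alpha l /\ length l = s) /\
  (forall l, admissible d alpha l -> (length l <= s)%nat).

Definition represents (i a b c : nat) (alpha : R) : Prop :=
  (1 <= a)%nat /\
  alpha = INR a * gpow_inv i + INR b * gpow_inv (i + 1) + INR c * gpow_inv (i + 2).

Definition good_quad (d : Z) (alpha : R) (i a b c : nat) : Prop :=
  represents i a b c alpha /\
  (d - 2 * f (i + 1) < Z.of_nat a * f i + Z.of_nat b * f (i + 1) + Z.of_nat c * f (i + 2))%Z /\
  (Z.of_nat a * f i + Z.of_nat b * f (i + 1) + Z.of_nat c * f (i + 2) <= d)%Z.

(* An element x + y γ^-1 of Z[γ] is handled through its integer coordinates
   (x, y); since γ^-1 is irrational these are determined by the real number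
   (rv_inj), so the theorem becomes a statement about integer pairs.
   - γ^-k has coordinates (-1)^k (f(k-2), -f(k-1)), and [lift t] (multiplication
     by γ^t) rewrites V in the basis (γ^-t, γ^-(t+1)); the quad (i; a, b, c)
     then reads (a + c, b - c).
   - Existence: the substitutions γ^-1 := ∓1 bound the weight of every
     representation from below; descending from a level where V is positive
     gives a quad attaining one of these bounds, hence of weight <= d. Splitting
     γ^-i = γ^-(i+1) + γ^-(i+2) raises the weight by 2 f(i+1) until it enters
     the window (d - 2 f(i+1), d].
   - Uniqueness: at a fixed level two good quads differ by a multiple of
     2 f(i+1) in weight; above the level of a good quad V is positive and the
     minimal weight there already exceeds d.
   - Maximality: a linear functional [dual i] with dual i (γ^-k) >= 2 f(i+1) - f(k),
     with equality on the quad's exponents, bounds the length of every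
     representation of weight <= d by a + b + c. *)

From Stdlib Require Import Reals ZArith List Lra Lia Psatz Sorted.
Import ListNotations.

Local Open Scope Z_scope.

Lemma f_SS n : f (S (S n)) = f (S n) + f n.
Proof. reflexivity. Qed.

Lemma f_pos n : 1 <= f n.
Proof.
  enough (1 <= f n /\ 1 <= f (S n)) by tauto.
  induction n as [|n IH]; [simpl; lia|]. rewrite f_SS; lia.
Qed.

(* [fm2 n] is f(n-2) for the extension of f to all integers, where f(-2) = 1
   and f(-1) = 0; it appears as a coefficient throughout. *)
Definition fm2 (n : nat) : Z :=
  match n with O => 1 | S O => 0 | S (S k) => f k end.

Lemma fm2_SS n : fm2 (S (S n)) = fm2 (S n) + fm2 n.
Proof. destruct n as [|[|k]]; reflexivity. Qed.

Lemma f_S n : f (S n) = f n + fm2 (S n).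
Proof. destruct n; reflexivity. Qed.

Lemma fm2_nonneg n : 0 <= fm2 n.
Proof. destruct n as [|[|k]]; simpl; try lia. apply Z.le_trans with 1; [lia | apply f_pos]. Qed.

Lemma fm2_le_f n : fm2 n <= f n /\ fm2 (S n) <= f n.
Proof.
  destruct n as [|[|k]]; [simpl; lia .. |].
  change (f k <= f (S (S k)) /\ f (S k) <= f (S (S k))).
  rewrite f_SS. pose proof (f_pos k). pose proof (f_pos (S k)). lia.
Qed.

Lemma f_ge2 n : 2 <= f (S (S n)).
Proof. rewrite f_SS. pose proof (f_pos n). pose proof (f_pos (S n)). lia. Qed.

Fixpoint sgn (k : nat) : Z := match k with O => 1 | S k => - sgn k end.

Lemma sgn_cases k :
  (sgn k = 1 /\ 1 <= fm2 k) \/ (sgn k = -1 /\ fm2 k + 1 <= fm2 (S k)).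
Proof.
  induction k as [|k [[Hs Hf] | [Hs Hf]]]; simpl sgn; [left; simpl; lia | right | left];
    rewrite Hs; rewrite ?fm2_SS; pose proof (fm2_nonneg k); lia.
Qed.

(** Coordinates in Z[γ] = Z ⊕ Z γ^-1: the pair (x, y) stands for x + y γ^-1. *)

Definition vadd (u v : Z * Z) : Z * Z := (fst u + fst v, snd u + snd v).
Definition vscale (n : Z) (v : Z * Z) : Z * Z := (n * fst v, n * snd v).

(* Multiplication by γ: γ (x + y γ^-1) = (x + y) + x γ^-1, as γ = 1 + γ^-1. *)
Definition mul_gamma (v : Z * Z) : Z * Z := (fst v + snd v, fst v).

(* Coordinates of γ^-k, namely (-1)^k (f(k-2) - f(k-1) γ^-1). *)
Definition coord (k : nat) : Z * Z := (sgn k * fm2 k, - sgn k * fm2 (S k)).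

Lemma mul_gamma_coord k : mul_gamma (coord (S k)) = coord k.
Proof. unfold mul_gamma, coord. simpl sgn. cbn [fst snd]. rewrite fm2_SS. f_equal; ring. Qed.

(* [lift t v] multiplies by γ^t, i.e. gives the coordinates of v in the basis
   (γ^-t, γ^-(t+1)). *)
Definition lift (t : nat) (v : Z * Z) : Z * Z := Nat.iter t mul_gamma v.

Lemma lift_S t v : lift (S t) v = mul_gamma (lift t v).
Proof. reflexivity. Qed.

Lemma lift_vadd t u v : lift t (vadd u v) = vadd (lift t u) (lift t v).
Proof.
  induction t as [|t IH]; [reflexivity|].
  rewrite !lift_S, IH. unfold mul_gamma, vadd. cbn [fst snd]. f_equal; ring.
Qed.

Lemma lift_vscale t n v : lift t (vscale n v) = vscale n (lift t v).
Proof.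
  induction t as [|t IH]; [reflexivity|].
  rewrite !lift_S, IH. unfold mul_gamma, vscale. cbn [fst snd]. f_equal; ring.
Qed.

Lemma lift_zero t : lift t (0, 0) = (0, 0).
Proof. induction t as [|t IH]; [reflexivity|]. rewrite lift_S, IH. reflexivity. Qed.

Lemma lift_inj t u v : lift t u = lift t v -> u = v.
Proof.
  induction t as [|t IH]; [easy|]. rewrite !lift_S. intro H. apply IH.
  unfold mul_gamma in H. destruct (lift t u) as [x y], (lift t v) as [x' y'].
  cbn [fst snd] in H. injection H as H1 H2. f_equal; lia.
Qed.

Lemma lift_coord t m : lift t (coord (t + m)) = coord m.
Proof.
  induction t as [|t IH]; [reflexivity|].
  unfold lift. rewrite Nat.iter_succ_r, Nat.add_succ_l, mul_gamma_coord. exact IH.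
Qed.

(* For k below the level, γ^t γ^-k = γ^(t-k) = f(t-k) + f(t-k-1) γ^-1. *)
Lemma lift_coord_below n k : lift (n + k) (coord k) = (f n, fm2 (S n)).
Proof.
  unfold lift. rewrite Nat.iter_add. fold (lift k (coord k)).
  rewrite <- (Nat.add_0_r k) at 2. rewrite lift_coord.
  induction n as [|n IH]; [reflexivity|].
  rewrite Nat.iter_succ, IH.
  unfold mul_gamma. cbn [fst snd]. rewrite <- f_S. reflexivity.
Qed.

Fixpoint coords (l : list nat) : Z * Z :=
  match l with [] => (0, 0) | k :: l => vadd (coord k) (coords l) end.

Definition qcoords (i a b c : nat) : Z * Z :=
  vadd (vscale (Z.of_nat a) (coord i))
       (vadd (vscale (Z.of_nat b) (coord (S i))) (vscale (Z.of_nat c) (coord (S (S i))))).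

Definition qweight (i a b c : nat) : Z :=
  Z.of_nat a * f i + Z.of_nat b * f (S i) + Z.of_nat c * f (S (S i)).

(* In the basis (γ^-i, γ^-(i+1)) the quad reads (a + c, b - c),
   as γ^-(i+2) = γ^-i - γ^-(i+1). *)
Lemma lift_qcoords i a b c :
  lift i (qcoords i a b c) = (Z.of_nat a + Z.of_nat c, Z.of_nat b - Z.of_nat c).
Proof.
  pose proof (lift_coord i 0) as L0. pose proof (lift_coord i 1) as L1.
  pose proof (lift_coord i 2) as L2.
  rewrite Nat.add_0_r in L0. rewrite Nat.add_1_r in L1.
  replace (i + 2)%nat with (S (S i)) in L2 by lia.
  unfold qcoords. rewrite !lift_vadd, !lift_vscale, L0, L1, L2.
  unfold vadd, vscale; simpl. f_equal; ring.
Qed.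

Lemma qweight_nonneg i a b c : 0 <= qweight i a b c.
Proof. unfold qweight. pose proof (f_pos i). pose proof (f_pos (S i)). pose proof (f_pos (S (S i))). nia. Qed.

(* phi is the substitution γ^-1 := -1; it sends γ^-k to ±f(k), so
   |phi| bounds weights from below. *)
Definition phi (v : Z * Z) : Z := fst v - snd v.

(* psi is the substitution γ^-1 := 1; it sends γ^-k to at most f(k). *)
Definition psi (v : Z * Z) : Z := fst v + snd v.

Lemma phi_vadd u v : phi (vadd u v) = phi u + phi v.
Proof. unfold phi, vadd; cbn [fst snd]. ring. Qed.

Lemma phi_vscale n v : phi (vscale n v) = n * phi v.
Proof. unfold phi, vscale; cbn [fst snd]. ring. Qed.

Lemma psi_vadd u v : psi (vadd u v) = psi u + psi v.
Proof. unfold psi, vadd; cbn [fst snd]. ring. Qed.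

Lemma phi_coord k : phi (coord k) = sgn k * f k.
Proof. unfold phi, coord; cbn [fst snd]. change (f k) with (fm2 (S (S k))). rewrite fm2_SS. ring. Qed.

Lemma psi_coord_le k : psi (coord k) <= f k.
Proof.
  unfold psi, coord; cbn [fst snd]. pose proof (fm2_le_f k). pose proof (fm2_nonneg k).
  pose proof (fm2_nonneg (S k)). destruct (sgn_cases k) as [[-> _] | [-> _]]; lia.
Qed.

Lemma sgn_abs k : Z.abs (sgn k) = 1.
Proof. destruct (sgn_cases k) as [[-> _] | [-> _]]; reflexivity. Qed.

Lemma phi_coords_le l : Z.abs (phi (coords l)) <= weight l.
Proof.
  induction l as [|k l IH]; [simpl; lia|]. simpl coords; simpl weight.
  rewrite phi_vadd, phi_coord. pose proof (f_pos k).
  destruct (sgn_cases k) as [[-> _] | [-> _]]; lia.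
Qed.

Lemma psi_coords_le l : psi (coords l) <= weight l.
Proof.
  induction l as [|k l IH]; [unfold psi; simpl; lia|]. simpl coords; simpl weight.
  rewrite psi_vadd. pose proof (psi_coord_le k). lia.
Qed.

(* A quad without γ^-(i+1) attains the bound |phi|: both of its powers have
   the same sign under phi. *)
Lemma phi_qcoords_b0 t a c : phi (qcoords t a 0 c) = sgn t * qweight t a 0 c.
Proof. unfold qcoords, qweight. rewrite !phi_vadd, !phi_vscale, !phi_coord. simpl sgn. ring. Qed.

(* At a level where the second coordinate is non-positive, V is the quad
   (t; p + q, 0, -q), of weight |phi V|. *)
Lemma quad_at_nonpos_level V t :
  1 <= psi (lift t V) -> snd (lift t V) <= 0 ->
  exists a c, (1 <= a)%nat /\ qcoords t a 0 c = V /\ qweight t a 0 c = Z.abs (phi V).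
Proof.
  intros Hpsi Hsnd.
  set (a := Z.to_nat (psi (lift t V))). set (c := Z.to_nat (- snd (lift t V))).
  assert (Hq : qcoords t a 0 c = V).
  { apply (lift_inj t). rewrite lift_qcoords. unfold a, c, psi in *.
    destruct (lift t V) as [p q]; cbn [fst snd] in *. f_equal; lia. }
  exists a, c. split; [unfold a; lia|]. split; [exact Hq|].
  rewrite <- Hq. rewrite phi_qcoords_b0, Z.abs_mul, sgn_abs, Z.abs_eq by apply qweight_nonneg.
  ring.
Qed.

Lemma quad_at_level0 V :
  1 <= fst V -> 0 <= snd V ->
  exists a b, (1 <= a)%nat /\ qcoords 0 a b 0 = V /\ qweight 0 a b 0 = psi V.
Proof.
  intros Hp Hq. exists (Z.to_nat (fst V)), (Z.to_nat (snd V)).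
  destruct V as [p q]; cbn [fst snd] in *. split; [lia|].
  unfold qcoords, qweight, psi, vadd, vscale; simpl. split; [f_equal|]; lia.
Qed.

(* Descending from a level where V is positive (first coordinate and psi at
   least 1) to the first level whose second coordinate is non-positive (or to
   level 0) yields a quad whose weight is one of the lower bounds. *)
Lemma quad_below_bounds V w t :
  1 <= fst (lift t V) -> 1 <= psi (lift t V) ->
  Z.abs (phi V) <= w -> psi V <= w ->
  exists i a b c, (1 <= a)%nat /\ qcoords i a b c = V /\ qweight i a b c <= w.
Proof.
  intros Hf Hp Hphi Hpsi. induction t as [|t IH].
  - destruct (Z_le_gt_dec (snd V) 0) as [Hs | Hs].
    + destruct (quad_at_nonpos_level V 0 Hp Hs) as (a & c & Ha & Hq & Hw).
      exists 0%nat, a, 0%nat, c. split; [exact Ha|]. split; [exact Hq | lia].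
    + destruct (quad_at_level0 V Hf ltac:(lia)) as (a & b & Ha & Hq & Hw).
      exists 0%nat, a, b, 0%nat. split; [exact Ha|]. split; [exact Hq | lia].
  - destruct (Z_le_gt_dec (snd (lift (S t) V)) 0) as [Hs | Hs].
    + destruct (quad_at_nonpos_level V (S t) Hp Hs) as (a & c & Ha & Hq & Hw).
      exists (S t), a, 0%nat, c. split; [exact Ha|]. split; [exact Hq | lia].
    + rewrite lift_S in Hf, Hp, Hs. unfold psi, mul_gamma in *. cbn [fst snd] in *.
      apply IH; lia.
Qed.

Fixpoint max_exponent (l : list nat) : nat :=
  match l with [] => 0%nat | k :: l => Nat.max k (max_exponent l) end.

Lemma max_exponent_spec l k : In k l -> (k <= max_exponent l)%nat.
Proof.
  induction l as [|x l IH]; simpl; [easy|].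
  intros [<- | H]; [lia | specialize (IH H); lia].
Qed.

(* Above all exponents of l, each γ^-k has coordinates (f(M-k), f(M-k-1)), so
   the sum has first coordinate at least the length and second at least 0. *)
Lemma lift_above_exponents M l :
  (forall k, In k l -> (k <= M)%nat) ->
  Z.of_nat (length l) <= fst (lift M (coords l)) /\ 0 <= snd (lift M (coords l)).
Proof.
  induction l as [|k l IH]; intros Hl; [simpl coords; rewrite lift_zero; simpl; lia|].
  simpl coords. rewrite lift_vadd. unfold vadd. cbn [fst snd length].
  assert (Hk : lift M (coord k) = (f (M - k), fm2 (S (M - k)))).
  { rewrite <- (lift_coord_below (M - k) k). f_equal. specialize (Hl k (or_introl eq_refl)). lia. }
  rewrite Hk. cbn [fst snd]. destruct IH as [I1 I2]; [intros x Hx; apply Hl; now right|].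
  pose proof (f_pos (M - k)). pose proof (fm2_nonneg (S (M - k))). lia.
Qed.

Lemma exists_light_quad L :
  L <> [] ->
  exists i a b c, (1 <= a)%nat /\ qcoords i a b c = coords L /\ qweight i a b c <= weight L.
Proof.
  intros HL. destruct (lift_above_exponents (max_exponent L) L (max_exponent_spec L)) as [H1 H2].
  assert (1 <= Z.of_nat (length L)) by (destruct L; [easy | simpl length; lia]).
  apply (quad_below_bounds _ _ (max_exponent L)); unfold psi; try lia.
  - apply phi_coords_le.
  - apply psi_coords_le.
Qed.

Definition good (d : Z) (V : Z * Z) (i a b c : nat) : Prop :=
  (1 <= a)%nat /\ qcoords i a b c = V /\
  d - 2 * f (S i) < qweight i a b c /\ qweight i a b c <= d.

(* Splitting one γ^-i into γ^-(i+1) + γ^-(i+2) keeps the value and adds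
   2 f(i+1) to the weight; when a = 1 the quad moves up one level. *)
Lemma split_quad i a b c :
  (1 <= a)%nat ->
  exists i' a' b' c', (1 <= a')%nat /\ qcoords i' a' b' c' = qcoords i a b c /\
    qweight i' a' b' c' = qweight i a b c + 2 * f (S i).
Proof.
  intros Ha. destruct a as [|[|a]]; [lia| |].
  - exists (S i), (S b), (S c), 0%nat. split; [lia|]. split.
    + apply (lift_inj (S i)). rewrite lift_qcoords, lift_S, lift_qcoords.
      unfold mul_gamma; cbn [fst snd]. f_equal; lia.
    + unfold qweight. rewrite !Nat2Z.inj_succ, !f_SS. simpl Z.of_nat. ring.
  - exists i, (S a), (S b), (S c). split; [lia|]. split.
    + apply (lift_inj i). rewrite !lift_qcoords. f_equal; lia.
    + unfold qweight. rewrite !Nat2Z.inj_succ, !f_SS. ring.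
Qed.

Lemma raise_into_window d V i a b c :
  (1 <= a)%nat -> qcoords i a b c = V -> qweight i a b c <= d ->
  exists i' a' b' c', good d V i' a' b' c'.
Proof.
  remember (Z.to_nat (d - qweight i a b c)) as n eqn:Hn. revert i a b c Hn.
  induction n as [n IH] using lt_wf_ind. intros i a b c Hn Ha Hq Hw.
  destruct (Z_lt_le_dec (d - 2 * f (S i)) (qweight i a b c)) as [Hin | Hout].
  - exists i, a, b, c. repeat split; assumption.
  - destruct (split_quad i a b c Ha) as (i' & a' & b' & c' & Ha' & Hq' & Hw').
    pose proof (f_pos (S i)).
    apply (IH (Z.to_nat (d - qweight i' a' b' c')) ltac:(lia) i' a' b' c'); try lia.
    congruence.
Qed.

(* The weight of the quad (t; p, q, 0) where (p, q) = lift t V; a quad at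
   level i differs from it by 2 c f(i+1). *)
Definition level_weight (V : Z * Z) (t : nat) : Z :=
  fst (lift t V) * f t + snd (lift t V) * f (S t).

Lemma qweight_level i a b c :
  qweight i a b c = level_weight (qcoords i a b c) i + 2 * Z.of_nat c * f (S i).
Proof. unfold level_weight. rewrite lift_qcoords. unfold qweight; cbn [fst snd]. rewrite f_SS. ring. Qed.

Lemma level_weight_S V t : level_weight V (S t) = level_weight V t + 2 * fst (lift t V) * f (S t).
Proof. unfold level_weight. rewrite lift_S. unfold mul_gamma; cbn [fst snd]. rewrite f_SS, (f_S t). ring. Qed.

(* Once V has positive coordinates at some level it keeps them above, and
   level_weight does not decrease from there on. *)
Lemma level_weight_mono V t m :
  1 <= fst (lift t V) -> 1 <= snd (lift t V) -> level_weight V t <= level_weight V (m + t).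
Proof.
  intros Hp Hq.
  assert (Hpos : forall n, 1 <= fst (lift (n + t) V) /\ 1 <= snd (lift (n + t) V)).
  { induction n as [|n IH]; [easy|]. simpl plus. rewrite lift_S. unfold mul_gamma; cbn [fst snd]. lia. }
  induction m as [|m IH]; [simpl; lia|]. simpl plus. rewrite level_weight_S.
  pose proof (f_pos (S (m + t))). destruct (Hpos m). nia.
Qed.

Lemma good_same_level d V i a b c a' b' c' :
  good d V i a b c -> good d V i a' b' c' -> a' = a /\ b' = b /\ c' = c.
Proof.
  intros (Ha & Hq & W1 & W2) (Ha' & Hq' & W1' & W2').
  pose proof (lift_qcoords i a b c) as L. pose proof (lift_qcoords i a' b' c') as L'.
  rewrite Hq in L. rewrite Hq' in L'. rewrite L in L'. injection L' as E1 E2.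
  rewrite qweight_level, Hq in W1, W2. rewrite qweight_level, Hq' in W1', W2'.
  pose proof (f_pos (S i)).
  assert (c' = c).
  { destruct (lt_eq_lt_dec c c') as [[Hc|Hc]|Hc]; [|easy|]; exfalso; nia. }
  subst c'. lia.
Qed.

(* A good quad at level i forces positive coordinates (a+b, a+c) at level
   i+1, whose level_weight already exceeds d; so no good quad lies higher. *)
Lemma good_no_higher d V i a b c i' a' b' c' :
  good d V i a b c -> good d V i' a' b' c' -> (i < i')%nat -> False.
Proof.
  intros (Ha & Hq & W1 & W2) (Ha' & Hq' & W1' & W2') Hii.
  pose proof (lift_qcoords i a b c) as L. rewrite Hq in L.
  assert (L1 : lift (S i) V = (Z.of_nat a + Z.of_nat b, Z.of_nat a + Z.of_nat c)).
  { rewrite lift_S, L. unfold mul_gamma; cbn [fst snd]. f_equal; ring. }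
  pose proof (level_weight_mono V (S i) (i' - S i)) as M.
  replace (i' - S i + S i)%nat with i' in M by lia.
  rewrite L1 in M; cbn [fst snd] in M. specialize (M ltac:(lia) ltac:(lia)).
  rewrite level_weight_S, L in M; cbn [fst snd] in M.
  rewrite qweight_level, Hq in W1. rewrite qweight_level, Hq' in W2'.
  pose proof (f_pos (S i)). pose proof (f_pos (S i')).
  assert (f (S i) <= Z.of_nat a * f (S i)) by nia.
  assert (0 <= Z.of_nat c' * f (S i')) by nia.
  lia.
Qed.

Lemma good_unique d V i a b c i' a' b' c' :
  good d V i a b c -> good d V i' a' b' c' -> i' = i /\ a' = a /\ b' = b /\ c' = c.
Proof.
  intros G G'. destruct (lt_eq_lt_dec i i') as [[Hi | <-] | Hi].
  - exfalso. exact (good_no_higher d V i a b c i' a' b' c' G G' Hi).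
  - split; [reflexivity | exact (good_same_level d V i a b c a' b' c' G G')].
  - exfalso. exact (good_no_higher d V i' a' b' c' i a b c G' G Hi).
Qed.

Lemma f_add t m : f (t + m) = f (S t) * fm2 (S m) + f t * fm2 m.
Proof.
  enough (f (t + m) = f (S t) * fm2 (S m) + f t * fm2 m /\
          f (t + S m) = f (S t) * fm2 (S (S m)) + f t * fm2 (S m)) by tauto.
  induction m as [|m [IH1 IH2]].
  - rewrite Nat.add_0_r, Nat.add_1_r. simpl fm2. split; ring.
  - split; [exact IH2|]. replace (t + S (S m))%nat with (S (S (t + m))) by lia.
    rewrite f_SS, <- Nat.add_succ_r, IH1, IH2, !fm2_SS. ring.
Qed.

(* The linear functional [dual t], with dual t (γ^-k) >= 2 f(t+1) - f(k) and
   equality for k = t, t+1, t+2. Summing over a representation bounds its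
   length in terms of its weight. *)
Definition dual (t : nat) (v : Z * Z) : Z :=
  psi (lift t v) * f (S t) + fst (lift t v) * fm2 (S t).

Lemma dual_vadd t u v : dual t (vadd u v) = dual t u + dual t v.
Proof. unfold dual, psi. rewrite lift_vadd. unfold vadd; cbn [fst snd]. ring. Qed.

Lemma dual_coord_ge t k : 2 * f (S t) - f k <= dual t (coord k).
Proof.
  unfold dual, psi. pose proof (f_pos t). pose proof (fm2_nonneg (S t)). pose proof (f_S t).
  destruct (le_lt_dec t k) as [Hk | Hk].
  - (* γ^t γ^-k = γ^-(k-t) *)
    replace k with (t + (k - t))%nat by lia. set (m := (k - t)%nat).
    rewrite lift_coord, f_add. unfold coord; cbn [fst snd].
    pose proof (fm2_nonneg m). pose proof (fm2_nonneg (S m)).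
    destruct (sgn_cases m) as [[-> Hm] | [-> Hm]].
    + assert (0 <= f (S t) * (fm2 m - 1)) by nia. nia.
    + assert (0 <= f (S t) * (fm2 (S m) - 1 - fm2 m)) by nia.
      assert (0 <= fm2 m * f t) by nia. nia.
  - (* γ^t γ^-k = γ^(t-k) has coordinates (f(t-k), f(t-k-1)) with f(t-k+1) >= 2 *)
    assert (HL : lift t (coord k) = (f (t - k), fm2 (S (t - k)))).
    { rewrite <- (lift_coord_below (t - k) k). f_equal. lia. }
    rewrite HL. cbn [fst snd].
    destruct (t - k)%nat as [|n] eqn:Hn; [lia|].
    pose proof (f_ge2 n). pose proof (f_pos (S n)). pose proof (f_pos k).
    rewrite <- f_S. nia.
Qed.

Lemma dual_coords_ge t l :
  2 * f (S t) * Z.of_nat (length l) - weight l <= dual t (coords l).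
Proof.
  induction l as [|k l IH].
  - simpl coords. unfold dual, psi. rewrite lift_zero. simpl. lia.
  - simpl coords; simpl weight; cbn [length]. rewrite dual_vadd, Nat2Z.inj_succ.
    pose proof (dual_coord_ge t k). lia.
Qed.

Lemma dual_qcoords i a b c :
  dual i (qcoords i a b c) = 2 * f (S i) * (Z.of_nat a + Z.of_nat b + Z.of_nat c) - qweight i a b c.
Proof.
  unfold dual, psi. rewrite lift_qcoords. unfold qweight; cbn [fst snd].
  rewrite f_SS, (f_S i). ring.
Qed.

(* Any representation of V of weight at most d has at most a + b + c terms,
   because the good quad's weight is within 2 f(i+1) of d. *)
Lemma good_length_bound d V i a b c l :
  good d V i a b c -> coords l = V -> weight l <= d ->
  (length l <= a + b + c)%nat.
Proof.
  intros (_ & Hq & W1 & _) Hl Hw.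
  pose proof (dual_coords_ge i l) as D. rewrite Hl, <- Hq, dual_qcoords in D.
  pose proof (f_pos (S i)).
  assert (Z.of_nat (length l) < Z.of_nat a + Z.of_nat b + Z.of_nat c + 1) by nia.
  lia.
Qed.

(* 5 q^2 = p^2 has only the trivial integer solution (infinite descent:
   (p, q) ↦ (5q - 2p, p - 2q) is a smaller solution). *)
Lemma sqrt5_irrational p q : 5 * q * q = p * p -> q = 0.
Proof.
  remember (Z.abs_nat q) as n eqn:Hn. revert p q Hn.
  induction n as [n IH] using lt_wf_ind. intros p q Hn H.
  destruct (Z.eq_dec q 0) as [|Hq]; [assumption|]. exfalso.
  assert (H0 : 5 * Z.abs q * Z.abs q = Z.abs p * Z.abs p) by (rewrite <- !Z.abs_mul, <- H; lia).
  assert (Hq0 : 0 < Z.abs q) by lia. pose proof (Z.abs_nonneg p).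
  assert (2 * Z.abs q < Z.abs p) by nia.
  assert (Z.abs p < 3 * Z.abs q) by nia.
  assert (Z.abs p - 2 * Z.abs q = 0); [|lia].
  apply (IH (Z.abs_nat (Z.abs p - 2 * Z.abs q)) ltac:(lia) (5 * Z.abs q - 2 * Z.abs p)); [reflexivity | nia].
Qed.

Local Open Scope R_scope.

Lemma sqrt5_sq : sqrt 5 * sqrt 5 = 5.
Proof. apply sqrt_sqrt. lra. Qed.

Lemma gamma_sq : gamma * gamma = gamma + 1.
Proof. unfold gamma. pose proof sqrt5_sq. nra. Qed.

Lemma gamma_neq0 : gamma <> 0.
Proof. unfold gamma. pose proof (sqrt_pos 5). lra. Qed.

(* The real number x + y γ^-1 with coordinates (x, y); note γ^-1 = γ - 1. *)
Definition rv (v : Z * Z) : R := IZR (fst v) + IZR (snd v) * (gamma - 1).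

Lemma rv_mul_gamma v : rv (mul_gamma v) = gamma * rv v.
Proof.
  destruct v as [x y]. unfold rv, mul_gamma; cbn [fst snd]. rewrite plus_IZR.
  replace (gamma * (IZR x + IZR y * (gamma - 1)))
    with (IZR x * gamma + IZR y * (gamma * gamma - gamma)) by ring.
  rewrite gamma_sq. ring.
Qed.

Lemma rv_vadd u v : rv (vadd u v) = rv u + rv v.
Proof. unfold rv, vadd; cbn [fst snd]. rewrite !plus_IZR. ring. Qed.

Lemma rv_vscale n v : rv (vscale n v) = IZR n * rv v.
Proof. unfold rv, vscale; cbn [fst snd]. rewrite !mult_IZR. ring. Qed.

Lemma gpow_inv_coord k : gpow_inv k = rv (coord k).
Proof.
  induction k as [|k IH].
  - unfold gpow_inv, rv. simpl. field.
  - assert (H : rv (coord k) = gamma * rv (coord (S k))) by (rewrite <- rv_mul_gamma, mul_gamma_coord; reflexivity).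
    unfold gpow_inv in *. simpl pow. rewrite Rinv_mult, IH, H.
    field. exact gamma_neq0.
Qed.

Lemma val_coords l : val l = rv (coords l).
Proof.
  induction l as [|k l IH]; [unfold rv; simpl; ring|].
  simpl val; simpl coords. rewrite rv_vadd, <- IH, gpow_inv_coord. reflexivity.
Qed.

Lemma quad_value i a b c :
  INR a * gpow_inv i + INR b * gpow_inv (i + 1) + INR c * gpow_inv (i + 2) = rv (qcoords i a b c).
Proof.
  replace (i + 1)%nat with (S i) by lia. replace (i + 2)%nat with (S (S i)) by lia.
  unfold qcoords. rewrite !rv_vadd, !rv_vscale, !gpow_inv_coord, !INR_IZR_INZ. ring.
Qed.

(* γ^-1 is irrational, so coordinates are determined by the real number. *)
Lemma rv_inj u v : rv u = rv v -> u = v.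
Proof.
  destruct u as [x y], v as [x' y']. unfold rv, gamma; cbn [fst snd]. intro H.
  assert (Hsq : IZR (y - y') * sqrt 5 = IZR (y - y' - 2 * (x - x'))).
  { rewrite !minus_IZR, mult_IZR, minus_IZR. lra. }
  assert (Hy : (y - y' = 0)%Z).
  { apply (sqrt5_irrational (y - y' - 2 * (x - x'))). apply eq_IZR.
    rewrite !mult_IZR, <- Hsq. pose proof sqrt5_sq. nra. }
  assert (y = y') by lia. subst y'.
  assert (IZR x = IZR x') by lra. apply eq_IZR in H0. subst. reflexivity.
Qed.

Definition qlist (i a b c : nat) : list nat :=
  repeat i a ++ repeat (i + 1)%nat b ++ repeat (i + 2)%nat c.

Lemma val_app l1 l2 : val (l1 ++ l2) = val l1 + val l2.
Proof. induction l1 as [|k l IH]; simpl; [ring | rewrite IH; ring]. Qed.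

Lemma weight_app l1 l2 : weight (l1 ++ l2) = (weight l1 + weight l2)%Z.
Proof. induction l1 as [|k l IH]; simpl; [reflexivity | rewrite IH; ring]. Qed.

Lemma val_repeat x n : val (repeat x n) = INR n * gpow_inv x.
Proof. induction n as [|n IH]; simpl repeat; simpl val; [simpl; ring | rewrite IH, S_INR; ring]. Qed.

Lemma weight_repeat x n : weight (repeat x n) = (Z.of_nat n * f x)%Z.
Proof. induction n as [|n IH]; simpl repeat; simpl weight; [reflexivity | rewrite IH, Nat2Z.inj_succ; ring]. Qed.

Lemma sorted_repeat_app x n l :
  Sorted le l -> (forall y, In y l -> (x <= y)%nat) -> Sorted le (repeat x n ++ l).
Proof.
  intros Hs Hl. induction n as [|n IH]; [exact Hs|].
  simpl. constructor; [exact IH|].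
  destruct n as [|n]; simpl.
  - destruct l as [|y l]; constructor. apply Hl. now left.
  - constructor. lia.
Qed.

Lemma qlist_sorted i a b c : Sorted le (qlist i a b c).
Proof.
  unfold qlist. apply sorted_repeat_app.
  - rewrite <- (app_nil_r (repeat (i + 2)%nat c)). apply sorted_repeat_app; [apply sorted_repeat_app|].
    + constructor.
    + easy.
    + intros y Hy. apply in_app_or in Hy. destruct Hy as [Hy | []]. apply repeat_spec in Hy. lia.
  - intros y Hy. apply in_app_or in Hy. destruct Hy as [Hy | Hy]; apply repeat_spec in Hy; lia.
Qed.

Lemma good_quad_iff d V i a b c : good_quad d (rv V) i a b c <-> good d V i a b c.
Proof.
  unfold good_quad, represents, good. rewrite quad_value.
  replace (i + 1)%nat with (S i) by lia. replace (i + 2)%nat with (S (S i)) by lia.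
  fold (qweight i a b c). split.
  - intros [[Ha Hr] Hw]. apply rv_inj in Hr. auto.
  - intros (Ha & Hq & Hw). rewrite Hq. auto.
Qed.

Lemma good_is_s d V i a b c : good d V i a b c -> is_s d (rv V) (a + b + c).
Proof.
  intros G. split.
  - destruct G as (Ha & Hq & _ & Hw). exists (qlist i a b c). repeat split.
    + apply qlist_sorted.
    + unfold qlist. rewrite !val_app, !val_repeat, <- Hq, <- quad_value. ring.
    + unfold qlist. rewrite !weight_app, !weight_repeat. unfold qweight in Hw.
      replace (i + 1)%nat with (S i) by lia. replace (i + 2)%nat with (S (S i)) by lia. lia.
    + unfold qlist. rewrite !length_app, !repeat_length. lia.
  - intros l (_ & Hv & Hw). apply (good_length_bound d V i a b c l G); [|exact Hw].
    apply rv_inj. rewrite <- val_coords. exact Hv.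
Qed.

Theorem mainTheorem17 (d : Z) (alpha : R) :
  (1 <= d)%Z -> in_E d alpha -> alpha <> 0%R ->
  exists i a b c : nat,
    good_quad d alpha i a b c /\
    (forall i' a' b' c' : nat, good_quad d alpha i' a' b' c' ->
       i' = i /\ a' = a /\ b' = b /\ c' = c) /\
    is_s d alpha (a + b + c).
Proof.
  intros _ [L (_ & Hv & Hw)] Hnz.
  assert (HL : L <> []) by (intros ->; apply Hnz; rewrite <- Hv; reflexivity).
  rewrite <- Hv, val_coords.
  destruct (exists_light_quad L HL) as (i0 & a0 & b0 & c0 & Ha0 & Hq0 & Hw0).
  destruct (raise_into_window d (coords L) i0 a0 b0 c0 Ha0 Hq0 ltac:(lia))
    as (i & a & b & c & G).
  exists i, a, b, c. split; [|split].
  - apply good_quad_iff, G.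
  - intros i' a' b' c' G'. apply good_quad_iff in G'. exact (good_unique _ _ _ _ _ _ _ _ _ _ G G').
  - exact (good_is_s _ _ _ _ _ _ G).
Qed.
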